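(* Let $\mathcal{H}_A$ and $\mathcal{H}_B$ be finite-dimensional Hilbert spaces. On $\mathcal{H}_A$ let $X_A=\{e^A_i\}$ and $Y_A=\{f^A_j\}$ be two orthonormal bases, and on $\mathcal{H}_B$ let $X_B=\{e^B_k\}$ and $Y_B=\{f^B_l\}$ be two orthonormal bases. Let $X_{AB}=\{e^A_i\otimes e^B_k\}_{i,k}$ and $Y_{AB}=\{f^A_j\otimes f^B_l\}_{j,l}$ be the corresponding product bases of $\mathcal{H}_A\otimes\mathcal{H}_B$. Fix weights $\lambda,\mu>0$, and suppose $c_A(\lambda,\mu),c_B(\lambda,\mu)\in\mathbb{R}$ satisfy $$\lambda H(X_A|\rho_A)+\mu H(Y_A|\rho_A)\ge c_A(\lambda,\mu)\quad\text{for all density matrices }\rho_A \text{ on }\mathcal{H}_A,$$ $$\lambda H(X_B|\rho_B)+\mu H(Y_B|\rho_B)\ge c_B(\lambda,\mu)\quad\text{for all density matrices }\rho_B \text{ on }\mathcal{H}_B.$$ Then $$\lambda H(X_{AB}|\rho_{AB})+\mu H(Y_{AB}|\rho_{AB})\ge c_A(\lambda,\mu)+c_B(\lambda,\mu)$$ for all density matrices $\rho_{AB}$ on $\mathcal{H}_A\otimes\mathcal{H}_B$. Moreover, if $c_A(\lambda,\mu)$ and $c_B(\lambda,\mu)$ are the optimal (largest possible) such constants, i.e. $c_A(\lambda,\mu)=\inf_{\rho_A}[\lambda H(X_A|\rho_A)+\mu H(Y_A|\rho_A)]$ and likewise for $B$, then $$\inf_{\rho_{AB}}\big[\lambda H(X_{AB}|\rho_{AB})+\mu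 H(Y_{AB}|\rho_{AB})\big]=c_A(\lambda,\mu)+c_B(\lambda,\mu).$$
   Context: A density matrix is a positive semidefinite operator of trace one. For an orthonormal basis $X=\{e_i\}$ of a finite-dimensional Hilbert space and a density matrix $\rho$, the outcome distribution is $p_i=\langle e_i|\rho|e_i\rangle$ and $H(X|\rho):=-\sum_i p_i\log p_i$ (Shannon entropy, with $0\log 0=0$ and a fixed logarithm base $>1$). *)

(* real numbers with ln; complex numbers built as pairs of reals.
   A d-dimensional Hilbert space is modelled as C^d, vectors as nat -> C
   (only indices < d matter), operators as nat -> nat -> C. *)
From Stdlib Require Import Reals.
Open Scope R_scope.

Record C := mkC { re : R ; im : R }.
Definition C0 : C := mkC 0 0.
Definition C1 : C := mkC 1 0.
Definition Cadd (x y : C) : C := mkC (re x + re y) (im x + im y).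
Definition Cmul (x y : C) : C :=
  mkC (re x * re y - im x * im y) (re x * im y + im x * re y).
Definition Cconj (x : C) : C := mkC (re x) (- im x).

Fixpoint csum (n : nat) (f : nat -> C) : C :=
  match n with O => C0 | S k => Cadd (csum k f) (f k) end.
Fixpoint rsum (n : nat) (f : nat -> R) : R :=
  match n with O => 0 | S k => rsum k f + f k end.

Definition vec := nat -> C.
Definition mat := nat -> nat -> C.

Definition inner (n : nat) (u v : vec) : C := csum n (fun i => Cmul (Cconj (u i)) (v i)).
Definition matvec (n : nat) (M : mat) (v : vec) : vec := fun i => csum n (fun j => Cmul (M i j) (v j)).

Definition density (n : nat) (rho : mat) : Prop :=
  (forall i j, (i < n)%nat -> (j < n)%nat -> rho j i = Cconj (rho i j)) /\
  (forall v : vec, 0 <= re (inner n v (matvec n rho v))) /\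
  csum n (fun i => rho i i) = C1.

Definition onb (n : nat) (e : nat -> vec) : Prop :=
  forall i j, (i < n)%nat -> (j < n)%nat ->
    inner n (e i) (e j) = if Nat.eqb i j then C1 else C0.

Definition prob (n : nat) (e : nat -> vec) (rho : mat) (i : nat) : R :=
  re (inner n (e i) (matvec n rho (e i))).

Definition plogp (b x : R) : R := if Rle_dec x 0 then 0 else x * (ln x / ln b).

Definition Hent (b : R) (n : nat) (e : nat -> vec) (rho : mat) : R :=
  - rsum n (fun i => plogp b (prob n e rho i)).

(* tensor product C^nA (x) C^nB = C^(nA*nB), index (a,c) |-> a*nB + c;
   product basis vector with index i*nB+k is e_i (x) f_k *)
Definition prodbasis (nB : nat) (e f : nat -> vec) : nat -> vec :=
  fun m a => Cmul (e (Nat.div m nB) (Nat.div a nB)) (f (Nat.modulo m nB) (Nat.modulo a nB)).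

Definition is_inf (S : R -> Prop) (m : R) : Prop :=
  (forall x, S x -> m <= x) /\ (forall m', (forall x, S x -> m' <= x) -> m' <= m).

Definition urvals (b lam mu : R) (n : nat) (X Y : nat -> vec) : R -> Prop :=
  fun x => exists rho, density n rho /\ x = lam * Hent b n X rho + mu * Hent b n Y rho.

(* Measuring [XA] on a state [rho] of [AB] leaves on [B], for each outcome [i], an
   unnormalised conditional state [condB rho (XA i)]; by the chain rule the entropies
   of [XA XB] and [XA YB] are sums of the entropies of these conditional states.
   Applying the relation on [B] to each of them gives
     lam H(XA XB) + mu H(XA YB) >= (lam + mu) H(XA) + cB,
   and conditioning on [YB] instead gives
     lam H(XA YB) + mu H(YA YB) >= (lam + mu) H(YB) + cA.
   Adding the two and using subadditivity, H(XA YB) <= H(XA) + H(YB), proves the bound.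
   For the optimal constants it is approached by product states [rhoA (x) rhoB], on
   which the entropies of product bases are additive; such a product is positive
   because [rhoA] has a Gram factorisation. *)

From Stdlib Require Import Reals Lra Lia FunctionalExtensionality.
From mathcomp Require ssreflect ssrfun ssrbool eqtype ssrnat fintype bigop ssralg matrix Rstruct.
From mathcomp.real_closed Require complex.
Set Bullet Behavior "Strict Subproofs".
Open Scope R_scope.

Lemma Ceq (x y : C) : re x = re y -> im x = im y -> x = y.
Proof. destruct x, y; simpl; intros; subst; reflexivity. Qed.

Definition Copp (x : C) : C := mkC (- re x) (- im x).
Definition Csub (x y : C) : C := Cadd x (Copp y).

Lemma C_ring : ring_theory C0 C1 Cadd Cmul Csub Copp (@eq C).
Proof.
constructor; intros; apply Ceq; destruct x; try destruct y; try destruct z;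
  unfold Cadd, Cmul, Csub, Copp, C0, C1; simpl; ring.
Qed.
Add Ring Cring : C_ring.

Lemma Cconj_add x y : Cconj (Cadd x y) = Cadd (Cconj x) (Cconj y).
Proof. apply Ceq; simpl; ring. Qed.
Lemma Cconj_mul x y : Cconj (Cmul x y) = Cmul (Cconj x) (Cconj y).
Proof. apply Ceq; simpl; ring. Qed.
Lemma Cconj_involutive x : Cconj (Cconj x) = x.
Proof. apply Ceq; simpl; ring. Qed.
Lemma Cconj_C0 : Cconj C0 = C0.
Proof. apply Ceq; simpl; ring. Qed.

Lemma csum_ext n f g : (forall i, (i < n)%nat -> f i = g i) -> csum n f = csum n g.
Proof.
induction n; simpl; intros H; [reflexivity|].
rewrite IHn by (intros; apply H; lia). rewrite H by lia; reflexivity.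
Qed.
Lemma csum_add n f g : csum n (fun i => Cadd (f i) (g i)) = Cadd (csum n f) (csum n g).
Proof. induction n; simpl; [apply Ceq; simpl; ring|]. rewrite IHn; ring. Qed.
Lemma csum_sub n f g : csum n (fun i => Csub (f i) (g i)) = Csub (csum n f) (csum n g).
Proof. induction n; simpl; [apply Ceq; simpl; ring|]. rewrite IHn; ring. Qed.
Lemma csum_mull n c f : csum n (fun i => Cmul c (f i)) = Cmul c (csum n f).
Proof. induction n; simpl; [apply Ceq; simpl; ring|]. rewrite IHn; ring. Qed.
Lemma csum_mulr n c f : csum n (fun i => Cmul (f i) c) = Cmul (csum n f) c.
Proof. induction n; simpl; [apply Ceq; simpl; ring|]. rewrite IHn; ring. Qed.
Lemma csum_zero n f : (forall i, (i < n)%nat -> f i = C0) -> csum n f = C0.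
Proof.
induction n; simpl; intros H; [reflexivity|].
rewrite IHn by (intros; apply H; lia). rewrite H by lia; ring.
Qed.
Lemma csum_swap n m f :
  csum n (fun i => csum m (fun j => f i j)) = csum m (fun j => csum n (fun i => f i j)).
Proof.
induction n; simpl.
- symmetry; apply csum_zero; reflexivity.
- rewrite IHn, <- csum_add; reflexivity.
Qed.
Lemma csum_plus k m f : csum (k + m) f = Cadd (csum k f) (csum m (fun c => f (k + c)%nat)).
Proof.
induction m; simpl.
- rewrite Nat.add_0_r; ring.
- rewrite Nat.add_succ_r; simpl; rewrite IHm; ring.
Qed.
Lemma csum_pair n m f : csum (n * m) f = csum n (fun a => csum m (fun c => f (a * m + c)%nat)).
Proof.
induction n; simpl; [reflexivity|].
rewrite Nat.add_comm, csum_plus, IHn; reflexivity.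
Qed.
Lemma Cconj_csum n f : Cconj (csum n f) = csum n (fun i => Cconj (f i)).
Proof.
induction n; simpl; [apply Ceq; simpl; ring|].
rewrite Cconj_add, IHn; reflexivity.
Qed.
Lemma re_csum n f : re (csum n f) = rsum n (fun i => re (f i)).
Proof. induction n; simpl; [reflexivity|]. rewrite IHn; reflexivity. Qed.
Lemma im_csum n f : im (csum n f) = rsum n (fun i => im (f i)).
Proof. induction n; simpl; [reflexivity|]. rewrite IHn; reflexivity. Qed.
Lemma csum_delta n (g : nat -> C) c : (c < n)%nat ->
  csum n (fun c' => Cmul (g c') (if Nat.eqb c' c then C1 else C0)) = g c.
Proof.
induction n; intros H; [lia|]. simpl.
destruct (Nat.eq_dec c n).
- subst. rewrite Nat.eqb_refl, csum_zero; [ring|].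
  intros i Hi. destruct (Nat.eqb_spec i n); [lia|ring].
- rewrite IHn by lia. destruct (Nat.eqb_spec n c); [lia|ring].
Qed.
Lemma csum4_reorder nA nB (F : nat -> nat -> nat -> nat -> C) :
  csum nA (fun a => csum nB (fun c => csum nA (fun a' => csum nB (fun c' => F a c a' c')))) =
  csum nB (fun c => csum nB (fun c' => csum nA (fun a => csum nA (fun a' => F a c a' c')))).
Proof.
transitivity (csum nA (fun a => csum nB (fun c => csum nB (fun c' => csum nA (fun a' => F a c a' c'))))).
- apply csum_ext; intros; apply csum_ext; intros; apply csum_swap.
- rewrite csum_swap. apply csum_ext; intros c _. apply csum_swap.
Qed.

Lemma csum_mul_csum n m x y z : Cmul (Cmul (csum n x) z) (csum m y) =
  csum n (fun a => csum m (fun a' => Cmul (Cmul (x a) z) (y a'))).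
Proof.
rewrite <- !csum_mulr. apply csum_ext; intros a _.
rewrite <- csum_mull. apply csum_ext; intros; ring.
Qed.

Lemma rsum_ext n f g : (forall i, (i < n)%nat -> f i = g i) -> rsum n f = rsum n g.
Proof.
induction n; simpl; intros H; [reflexivity|].
rewrite IHn by (intros; apply H; lia). rewrite H by lia; reflexivity.
Qed.
Lemma rsum_add n f g : rsum n (fun i => f i + g i) = rsum n f + rsum n g.
Proof. induction n; simpl; [ring|]. rewrite IHn; ring. Qed.
Lemma rsum_mull n c f : rsum n (fun i => c * f i) = c * rsum n f.
Proof. induction n; simpl; [ring|]. rewrite IHn; ring. Qed.
Lemma rsum_mulr n c f : rsum n (fun i => f i * c) = rsum n f * c.
Proof. induction n; simpl; [ring|]. rewrite IHn; ring. Qed.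
Lemma rsum_opp n f : rsum n (fun i => - f i) = - rsum n f.
Proof. induction n; simpl; [ring|]. rewrite IHn; ring. Qed.
Lemma rsum_zero n f : (forall i, (i < n)%nat -> f i = 0) -> rsum n f = 0.
Proof.
induction n; simpl; intros H; [reflexivity|].
rewrite IHn by (intros; apply H; lia). rewrite H by lia; ring.
Qed.
Lemma rsum_le n f g : (forall i, (i < n)%nat -> f i <= g i) -> rsum n f <= rsum n g.
Proof.
induction n; simpl; intros H; [lra|].
specialize (IHn (fun i Hi => H i ltac:(lia))). specialize (H n ltac:(lia)). lra.
Qed.
Lemma rsum_nonneg n f : (forall i, (i < n)%nat -> 0 <= f i) -> 0 <= rsum n f.
Proof.
intros H. replace 0 with (rsum n (fun _ => 0)) by (apply rsum_zero; auto).
apply rsum_le; auto.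
Qed.
Lemma rsum_swap n m f :
  rsum n (fun i => rsum m (fun j => f i j)) = rsum m (fun j => rsum n (fun i => f i j)).
Proof.
induction n; simpl.
- symmetry; apply rsum_zero; reflexivity.
- rewrite IHn, <- rsum_add; reflexivity.
Qed.
Lemma rsum_plus k m f : rsum (k + m) f = rsum k f + rsum m (fun c => f (k + c)%nat).
Proof.
induction m; simpl.
- rewrite Nat.add_0_r; ring.
- rewrite Nat.add_succ_r; simpl; rewrite IHm; ring.
Qed.
Lemma rsum_pair n m f : rsum (n * m) f = rsum n (fun a => rsum m (fun c => f (a * m + c)%nat)).
Proof.
induction n; simpl; [reflexivity|].
rewrite Nat.add_comm, rsum_plus, IHn; reflexivity.
Qed.
Lemma rsum_ge_term n f l : (forall i, (i < n)%nat -> 0 <= f i) -> (l < n)%nat -> f l <= rsum n f.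
Proof.
induction n; intros H Hl; [lia|]. simpl.
assert (A := rsum_nonneg n f (fun j Hj => H j ltac:(lia))).
destruct (Nat.eq_dec l n).
- subst; lra.
- assert (0 <= f n) by (apply H; lia). assert (f l <= rsum n f) by (apply IHn; [intros; apply H; lia|lia]). lra.
Qed.
Lemma rsum_nonneg_eq0 n f : (forall i, (i < n)%nat -> 0 <= f i) -> rsum n f = 0 ->
  forall i, (i < n)%nat -> f i = 0.
Proof.
intros H S i Hi. assert (f i <= rsum n f) by (apply rsum_ge_term; auto).
assert (0 <= f i) by auto. lra.
Qed.

Lemma pair_div nB a c : (c < nB)%nat -> Nat.div (a * nB + c) nB = a.
Proof. intros H. rewrite Nat.div_add_l, Nat.div_small by lia. lia. Qed.
Lemma pair_mod nB a c : (c < nB)%nat -> Nat.modulo (a * nB + c) nB = c.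
Proof. intros H. rewrite Nat.add_comm, Nat.Div0.mod_add. apply Nat.mod_small; lia. Qed.
Lemma pair_lt nA nB a c : (a < nA)%nat -> (c < nB)%nat -> (a * nB + c < nA * nB)%nat.
Proof. intros. nia. Qed.
Lemma pair_bounds nA nB m : (m < nA * nB)%nat ->
  (Nat.div m nB < nA)%nat /\ (Nat.modulo m nB < nB)%nat.
Proof.
intros H. assert (nB <> 0%nat) by (intro; subst; lia). split.
- apply Nat.Div0.div_lt_upper_bound; lia.
- apply Nat.mod_upper_bound; auto.
Qed.

Module OnbCompleteness.
Import ssreflect ssrfun ssrbool eqtype ssrnat fintype bigop ssralg matrix Rstruct complex.
Import GRing.Theory.
Local Open Scope ring_scope.

Definition toRi (x : C) : R[i] := Complex (re x) (im x).

Lemma toRi_inj x y : toRi x = toRi y -> x = y.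
Proof. by case: x => a b; case: y => c d /= [-> ->]. Qed.
Lemma toRi_mul x y : toRi (Cmul x y) = toRi x * toRi y.
Proof. by case: x => a b; case: y => c d. Qed.
Lemma toRi_add x y : toRi (Cadd x y) = toRi x + toRi y.
Proof. by case: x => a b; case: y => c d. Qed.
Lemma toRi_csum n g : toRi (csum n g) = \sum_(k < n) toRi (g k).
Proof.
elim: n => [|n IH]; first by rewrite big_ord0.
by rewrite big_ord_recr /= toRi_add IH.
Qed.

(* The orthonormality of [e] says [V *m W = 1] for the matrices [V k b = conj (e k b)]
   and [W b k = e k b]; completeness is the other product [W *m V = 1]. *)
Lemma onb_complete n e : onb n e -> forall a a', lt a n -> lt a' n ->
  csum n (fun k => Cmul (e k a) (Cconj (e k a'))) = if Nat.eqb a a' then C1 else C0.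
Proof.
move=> He a a' /ltP ha /ltP ha'.
pose V : 'M[R[i]]_n := \matrix_(k, b) toRi (Cconj (e k b)).
pose W : 'M[R[i]]_n := \matrix_(b, k) toRi (e k b).
have VW : V *m W = 1%:M.
  apply/matrixP => k l; rewrite !mxE.
  have := He k l (elimT ltP (ltn_ord k)) (elimT ltP (ltn_ord l)); rewrite /inner => E.
  under eq_bigr do rewrite !mxE -toRi_mul.
  rewrite -(toRi_csum n (fun x => Cmul (Cconj (e k x)) (e l x))) E.
  case: (PeanoNat.Nat.eqb_spec k l) => [/val_inj -> | kl]; first by rewrite eqxx.
  by rewrite (introF eqP) // => kl'; apply: kl; rewrite kl'.
have := congr1 (fun M : 'M[R[i]]_n => M (Ordinal ha) (Ordinal ha')) (mulmx1C VW).
rewrite !mxE /= => E.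
apply: toRi_inj; rewrite toRi_csum.
have -> : \sum_(k < n) toRi (Cmul (e k a) (Cconj (e k a')))
          = \sum_j W (Ordinal ha) j * V j (Ordinal ha').
  by apply: eq_bigr => k _; rewrite !mxE toRi_mul.
rewrite E; case: (PeanoNat.Nat.eqb_spec a a') => [aa | aa].
  by subst a'; rewrite (_ : Ordinal ha == Ordinal ha' = true) //; apply/eqP/val_inj.
by rewrite (introF eqP) // => [[]].
Qed.
End OnbCompleteness.

Definition quad (n : nat) (M : mat) (v : vec) : C := inner n v (matvec n M v).
Definition trace (n : nat) (M : mat) : C := csum n (fun i => M i i).
Definition Herm (n : nat) (M : mat) : Prop :=
  forall i j, (i < n)%nat -> (j < n)%nat -> M j i = Cconj (M i j).
Definition PSD (n : nat) (M : mat) : Prop := forall v, 0 <= re (quad n M v).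

Lemma quad_expand n M v : quad n M v =
  csum n (fun i => csum n (fun j => Cmul (Cmul (Cconj (v i)) (M i j)) (v j))).
Proof.
unfold quad, inner, matvec. apply csum_ext; intros i _.
rewrite <- csum_mull. apply csum_ext; intros; ring.
Qed.

Lemma quad_ext n M M' v v' : (forall i j, (i < n)%nat -> (j < n)%nat -> M i j = M' i j) ->
  (forall i, (i < n)%nat -> v i = v' i) -> quad n M v = quad n M' v'.
Proof.
intros HM Hv. rewrite !quad_expand.
apply csum_ext; intros i Hi; apply csum_ext; intros j Hj.
rewrite HM, !Hv by auto. reflexivity.
Qed.

Lemma Cconj_quad n M M' v : (forall i j, (i < n)%nat -> (j < n)%nat -> M' j i = Cconj (M i j)) ->
  Cconj (quad n M v) = quad n M' v.
Proof.
intros H. rewrite !quad_expand, Cconj_csum, csum_swap.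
apply csum_ext; intros i Hi. rewrite Cconj_csum. apply csum_ext; intros j Hj.
rewrite !Cconj_mul, Cconj_involutive, H by auto. ring.
Qed.

Lemma im_quad_Herm n M v : Herm n M -> im (quad n M v) = 0.
Proof. intros H. assert (E := f_equal im (Cconj_quad n M M v H)). simpl in E. lra. Qed.

Lemma im_trace_Herm n M : Herm n M -> im (trace n M) = 0.
Proof.
intros H. unfold trace. rewrite im_csum. apply rsum_zero. intros i Hi.
assert (E := f_equal im (H i i Hi Hi)). simpl in E. lra.
Qed.

Lemma quad_scale n k M v : quad n (fun i j => Cmul k (M i j)) v = Cmul k (quad n M v).
Proof.
rewrite !quad_expand, <- csum_mull. apply csum_ext; intros i _.
rewrite <- csum_mull. apply csum_ext; intros; ring.
Qed.

Lemma quad_csum n m (M : nat -> mat) v :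
  quad n (fun i j => csum m (fun c => M c i j)) v = csum m (fun c => quad n (M c) v).
Proof.
rewrite (csum_ext m _ (fun c => csum n (fun i => csum n (fun j =>
  Cmul (Cmul (Cconj (v i)) (M c i j)) (v j))))) by (intros; apply quad_expand).
rewrite quad_expand, <- (csum_swap n m). apply csum_ext; intros i _.
rewrite <- (csum_swap n m). apply csum_ext; intros j _.
rewrite <- csum_mull, <- csum_mulr. reflexivity.
Qed.

Lemma csum_quad_onb n M f : onb n f -> csum n (fun k => quad n M (f k)) = trace n M.
Proof.
intros Hf.
rewrite (csum_ext n _ (fun k => csum n (fun i => csum n (fun j =>
  Cmul (Cmul (Cconj (f k i)) (M i j)) (f k j))))) by (intros; apply quad_expand).
rewrite csum_swap. apply csum_ext; intros i Hi. rewrite csum_swap.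
rewrite (csum_ext n _ (fun j => Cmul (M i j) (if Nat.eqb j i then C1 else C0))).
- apply csum_delta; auto.
- intros j Hj. rewrite <- (OnbCompleteness.onb_complete n f Hf j i Hj Hi), <- csum_mull.
  apply csum_ext; intros; ring.
Qed.

Lemma rsum_prob_onb n f M : onb n f -> rsum n (prob n f M) = re (trace n M).
Proof. intros H. rewrite <- (csum_quad_onb n M f H), re_csum. reflexivity. Qed.

(** * Shannon entropy *)

Definition entropy (b : R) (n : nat) (p : nat -> R) : R := - rsum n (fun i => plogp b (p i)).

Lemma ln_base_pos b : 1 < b -> 0 < ln b.
Proof. intros H. rewrite <- ln_1. apply ln_increasing; lra. Qed.

Lemma plogp_nonneg b x : 0 <= x -> plogp b x = x * (ln x / ln b).
Proof.
intros H. unfold plogp.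
destruct (Rle_dec x 0); [assert (x = 0) by lra; subst; ring | reflexivity].
Qed.

Lemma plogp_mul b p q : 0 <= p -> 0 <= q -> plogp b (p * q) = q * plogp b p + p * plogp b q.
Proof.
intros Hp Hq. rewrite !plogp_nonneg by (auto; nra).
destruct (Req_dec p 0) as [->|Pp]; [ring|].
destruct (Req_dec q 0) as [->|Pq]; [ring|].
rewrite ln_mult by lra. unfold Rdiv. ring.
Qed.

Lemma entropy_scale b n t q : 0 <= t -> (forall k, (k < n)%nat -> 0 <= q k) -> rsum n q = 1 ->
  entropy b n (fun k => t * q k) = t * entropy b n q - plogp b t.
Proof.
intros Ht Hq Sq. unfold entropy.
rewrite (rsum_ext n _ (fun k => q k * plogp b t + t * plogp b (q k)))
  by (intros; apply plogp_mul; auto).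
rewrite rsum_add, rsum_mulr, rsum_mull, Sq. ring.
Qed.

(* From [ln y <= y - 1] at [y = t s / q]. *)
Lemma plogp_gibbs b q t s : 1 < b -> 0 <= q -> q <= t -> q <= s ->
  q * (ln t / ln b) + q * (ln s / ln b) + (q - t * s) / ln b <= plogp b q.
Proof.
intros Hb Hq Ht Hs. assert (lb := ln_base_pos b Hb).
rewrite plogp_nonneg by auto.
apply (Rmult_le_reg_r (ln b)); auto.
replace ((q * (ln t / ln b) + q * (ln s / ln b) + (q - t * s) / ln b) * ln b)
  with (q * ln t + q * ln s + q - t * s) by (field; lra).
replace (q * (ln q / ln b) * ln b) with (q * ln q) by (field; lra).
destruct (Req_dec q 0) as [->|Hq0]; [nra|].
assert (y0 : 0 < t * s / q) by (apply Rdiv_lt_0_compat; nra).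
assert (L : ln (t * s / q) <= t * s / q - 1).
{ assert (E := exp_ineq1_le (ln (t * s / q))). rewrite exp_ln in E by auto. lra. }
unfold Rdiv in L. rewrite ln_mult, ln_mult, ln_Rinv in L by (try apply Rinv_0_lt_compat; nra).
replace (t * s * / q - 1) with ((t * s - q) / q) in L by (field; lra).
apply (Rmult_le_compat_l q) in L; [|lra].
replace (q * ((t * s - q) / q)) with (t * s - q) in L by (field; lra). nra.
Qed.

Lemma entropy_subadditive b nA nB (Q : nat -> nat -> R) (t s : nat -> R) : 1 < b ->
  (forall i l, (i < nA)%nat -> (l < nB)%nat -> 0 <= Q i l) ->
  (forall i, (i < nA)%nat -> rsum nB (Q i) = t i) ->
  (forall l, (l < nB)%nat -> rsum nA (fun i => Q i l) = s l) ->
  rsum nB s = 1 ->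
  - rsum nA (fun i => rsum nB (fun l => plogp b (Q i l))) <= entropy b nA t + entropy b nB s.
Proof.
intros Hb HQ Ht Hs Ss. assert (lb := ln_base_pos b Hb).
assert (Qt : forall i l, (i < nA)%nat -> (l < nB)%nat -> Q i l <= t i).
{ intros i l Hi Hl. rewrite <- Ht by auto. apply rsum_ge_term; auto. }
assert (Qs : forall i l, (i < nA)%nat -> (l < nB)%nat -> Q i l <= s l).
{ intros i l Hi Hl. rewrite <- Hs by auto.
  apply (rsum_ge_term nA (fun i => Q i l)); auto. }
assert (t0 : forall i, (i < nA)%nat -> 0 <= t i).
{ intros i Hi. rewrite <- Ht by auto. apply rsum_nonneg; auto. }
assert (s0 : forall l, (l < nB)%nat -> 0 <= s l).
{ intros l Hl. rewrite <- Hs by auto. apply rsum_nonneg; auto. }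
assert (Lt : rsum nA (fun i => rsum nB (fun l => Q i l * (ln (t i) / ln b)))
             = rsum nA (fun i => plogp b (t i))).
{ apply rsum_ext; intros i Hi. rewrite rsum_mulr, Ht, plogp_nonneg by auto. reflexivity. }
assert (Ls : rsum nA (fun i => rsum nB (fun l => Q i l * (ln (s l) / ln b)))
             = rsum nB (fun l => plogp b (s l))).
{ rewrite rsum_swap. apply rsum_ext; intros l Hl.
  rewrite (rsum_mulr nA (ln (s l) / ln b) (fun i => Q i l)), Hs, plogp_nonneg by auto.
  reflexivity. }
assert (L0 : rsum nA (fun i => rsum nB (fun l => (Q i l - t i * s l) / ln b)) = 0).
{ apply rsum_zero; intros i Hi. unfold Rdiv. rewrite rsum_mulr.
  unfold Rminus. rewrite rsum_add, rsum_opp, rsum_mull, Ss, Ht by auto. ring. }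
assert (Le : rsum nA (fun i => rsum nB (fun l =>
    Q i l * (ln (t i) / ln b) + Q i l * (ln (s l) / ln b) + (Q i l - t i * s l) / ln b))
  <= rsum nA (fun i => rsum nB (fun l => plogp b (Q i l)))).
{ apply rsum_le; intros i Hi; apply rsum_le; intros l Hl. apply plogp_gibbs; auto. }
rewrite (rsum_ext nA _ (fun i => rsum nB (fun l => Q i l * (ln (t i) / ln b))
    + rsum nB (fun l => Q i l * (ln (s l) / ln b))
    + rsum nB (fun l => (Q i l - t i * s l) / ln b))) in Le
  by (intros; rewrite !rsum_add; reflexivity).
rewrite !rsum_add, Lt, Ls, L0 in Le. unfold entropy. lra.
Qed.

Definition scalemat (k : R) (M : mat) : mat := fun i j => Cmul (mkC k 0) (M i j).

Lemma prob_nonneg n e M i : PSD n M -> 0 <= prob n e M i.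
Proof. intros H. apply H. Qed.

Lemma prob_scalemat n e k M i : prob n e (scalemat k M) i = k * prob n e M i.
Proof.
unfold prob. fold (quad n (scalemat k M) (e i)) (quad n M (e i)).
unfold scalemat. rewrite quad_scale. simpl. ring.
Qed.

Lemma Hent_scalemat b n e t M : onb n e -> PSD n M -> re (trace n M) = 1 -> 0 <= t ->
  Hent b n e (scalemat t M) = t * Hent b n e M - plogp b t.
Proof.
intros He HM TM Ht.
change (entropy b n (prob n e (scalemat t M)) = t * entropy b n (prob n e M) - plogp b t).
rewrite <- entropy_scale; auto.
- unfold entropy. f_equal. apply rsum_ext; intros. rewrite prob_scalemat; reflexivity.
- intros; apply prob_nonneg; auto.
- rewrite rsum_prob_onb; auto.
Qed.

Lemma density_normalize n M : Herm n M -> PSD n M -> 0 < re (trace n M) ->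
  density n (scalemat (/ re (trace n M)) M).
Proof.
intros Hh Hp Ht. split; [|split].
- intros i j Hi Hj. unfold scalemat. rewrite Hh by auto. apply Ceq; simpl; ring.
- intros v. fold (quad n (scalemat (/ re (trace n M)) M) v). unfold scalemat.
  rewrite quad_scale. simpl. rewrite Rmult_0_l, Rminus_0_r.
  apply Rmult_le_pos; [left; apply Rinv_0_lt_compat; auto | apply Hp].
- unfold scalemat. rewrite csum_mull. fold (trace n M).
  apply Ceq; simpl; rewrite (im_trace_Herm n M Hh); [field|ring]; lra.
Qed.

Lemma Hent_trace0 b n e M : onb n e -> PSD n M -> re (trace n M) = 0 -> Hent b n e M = 0.
Proof.
intros He HM T. unfold Hent. rewrite rsum_zero; [ring|]. intros k Hk.
rewrite (rsum_nonneg_eq0 n (prob n e M)); auto.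
- unfold plogp. destruct (Rle_dec 0 0); lra.
- intros; apply prob_nonneg; auto.
- rewrite rsum_prob_onb; auto.
Qed.

Section UncertaintyRelation.
Variables (b : R) (n : nat) (f g : nat -> vec) (lam mu c : R).
Hypotheses (hf : onb n f) (hg : onb n g).
Hypothesis hrel : forall rho, density n rho -> lam * Hent b n f rho + mu * Hent b n g rho >= c.

Lemma uncertainty_unnormalized sigma : Herm n sigma -> PSD n sigma ->
  lam * Hent b n f sigma + mu * Hent b n g sigma
  >= re (trace n sigma) * c - (lam + mu) * plogp b (re (trace n sigma)).
Proof.
intros Hh Hp. set (t := re (trace n sigma)).
assert (t0 : 0 <= t).
{ unfold t. rewrite <- (rsum_prob_onb n f) by auto. apply rsum_nonneg.
  intros; apply prob_nonneg; auto. }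
destruct (Req_dec t 0) as [T|T].
- rewrite !Hent_trace0 by auto. rewrite T. unfold plogp. destruct (Rle_dec 0 0); lra.
- set (rho := scalemat (/ t) sigma).
  assert (Hd : density n rho) by (apply density_normalize; auto; fold t; lra).
  assert (Tr : re (trace n rho) = 1).
  { destruct Hd as [_ [_ E]]. fold (trace n rho) in E. rewrite E. reflexivity. }
  assert (E : sigma = scalemat t rho).
  { extensionality i; extensionality j. unfold rho, scalemat. apply Ceq; simpl; field; lra. }
  assert (Hc := hrel rho Hd). destruct Hd as [_ [HpR _]].
  rewrite E, !Hent_scalemat by auto.
  assert (t * c <= t * (lam * Hent b n f rho + mu * Hent b n g rho))
    by (apply Rmult_le_compat_l; lra).
  lra.
Qed.

Lemma uncertainty_mixture m (sigma : nat -> mat) :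
  (forall i, (i < m)%nat -> Herm n (sigma i)) -> (forall i, (i < m)%nat -> PSD n (sigma i)) ->
  rsum m (fun i => re (trace n (sigma i))) = 1 ->
  lam * rsum m (fun i => Hent b n f (sigma i)) + mu * rsum m (fun i => Hent b n g (sigma i))
  >= (lam + mu) * entropy b m (fun i => re (trace n (sigma i))) + c.
Proof.
intros Hh Hp T.
assert (L := rsum_le m
  (fun i => re (trace n (sigma i)) * c - (lam + mu) * plogp b (re (trace n (sigma i))))
  (fun i => lam * Hent b n f (sigma i) + mu * Hent b n g (sigma i))
  (fun i Hi => Rge_le _ _ (uncertainty_unnormalized (sigma i) (Hh i Hi) (Hp i Hi)))).
unfold Rminus in L. rewrite !rsum_add, rsum_mulr, T in L.
rewrite (rsum_ext m (fun i => - ((lam + mu) * plogp b (re (trace n (sigma i)))))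
  (fun i => - (lam + mu) * plogp b (re (trace n (sigma i))))) in L by (intros; ring).
rewrite !rsum_mull in L. unfold entropy. lra.
Qed.

End UncertaintyRelation.

(** * Bipartite states *)

Definition kron (nB : nat) (u v : vec) : vec :=
  fun m => Cmul (u (Nat.div m nB)) (v (Nat.modulo m nB)).

(* [condB nA nB rho u] is the unnormalised state left on B when A is found in [u],
   i.e. [<u|rho|u>] with the A indices contracted; [condA nB rho v] is the state left
   on A when B is found in [v]. *)
Definition condB (nA nB : nat) (rho : mat) (u : vec) : mat :=
  fun c c' => quad nA (fun a a' => rho (a * nB + c)%nat (a' * nB + c')%nat) u.
Definition condA (nB : nat) (rho : mat) (v : vec) : mat :=
  fun a a' => quad nB (fun c c' => rho (a * nB + c)%nat (a' * nB + c')%nat) v.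

Definition ptraceB (nB : nat) (rho : mat) : mat :=
  fun a a' => csum nB (fun c => rho (a * nB + c)%nat (a' * nB + c)%nat).
Definition ptraceA (nA nB : nat) (rho : mat) : mat :=
  fun c c' => csum nA (fun a => rho (a * nB + c)%nat (a * nB + c')%nat).

Lemma prodbasis_kron nB e f i k : (k < nB)%nat ->
  prodbasis nB e f (i * nB + k)%nat = kron nB (e i) (f k).
Proof.
intros H. extensionality a. unfold prodbasis, kron. rewrite pair_div, pair_mod by auto.
reflexivity.
Qed.

Lemma quad_pair nA nB rho V : quad (nA * nB) rho V =
  csum nA (fun a => csum nB (fun c => csum nA (fun a' => csum nB (fun c' =>
    Cmul (Cmul (Cconj (V (a * nB + c)%nat)) (rho (a * nB + c)%nat (a' * nB + c')%nat))
         (V (a' * nB + c')%nat))))).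
Proof.
rewrite quad_expand, csum_pair. apply csum_ext; intros a Ha; apply csum_ext; intros c Hc.
rewrite csum_pair. reflexivity.
Qed.

Lemma quad_kron nA nB rho u v : quad (nA * nB) rho (kron nB u v) =
  csum nA (fun a => csum nB (fun c => csum nA (fun a' => csum nB (fun c' =>
    Cmul (Cmul (Cmul (Cconj (u a)) (Cconj (v c))) (rho (a * nB + c)%nat (a' * nB + c')%nat))
         (Cmul (u a') (v c')))))).
Proof.
rewrite quad_pair. unfold kron.
apply csum_ext; intros a Ha; apply csum_ext; intros c Hc;
apply csum_ext; intros a' Ha'; apply csum_ext; intros c' Hc'.
rewrite !pair_div, !pair_mod, Cconj_mul by auto. ring.
Qed.

Lemma Cmul_csum2 n m x y (g : nat -> nat -> C) :
  Cmul (Cmul x (csum n (fun a => csum m (g a)))) y =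
  csum n (fun a => csum m (fun b => Cmul (Cmul x (g a b)) y)).
Proof.
rewrite <- csum_mull, <- csum_mulr. apply csum_ext; intros a _.
rewrite <- csum_mull, <- csum_mulr. reflexivity.
Qed.

Lemma quad_kron_condB nA nB rho u v :
  quad (nA * nB) rho (kron nB u v) = quad nB (condB nA nB rho u) v.
Proof.
rewrite quad_kron, quad_expand, csum4_reorder. unfold condB.
apply csum_ext; intros c _; apply csum_ext; intros c' _.
rewrite quad_expand, Cmul_csum2. apply csum_ext; intros a _; apply csum_ext; intros a' _.
ring.
Qed.

Lemma quad_kron_condA nA nB rho u v :
  quad (nA * nB) rho (kron nB u v) = quad nA (condA nB rho v) u.
Proof.
rewrite quad_kron, quad_expand. unfold condA.
apply csum_ext; intros a _.
transitivity (csum nA (fun a' => csum nB (fun c => csum nB (fun c' =>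
  Cmul (Cmul (Cmul (Cconj (u a)) (Cconj (v c))) (rho (a * nB + c)%nat (a' * nB + c')%nat))
       (Cmul (u a') (v c')))))).
- apply csum_swap.
- apply csum_ext; intros a' _. rewrite quad_expand, Cmul_csum2.
  apply csum_ext; intros c _; apply csum_ext; intros c' _. ring.
Qed.

Lemma trace_condB nA nB rho u : trace nB (condB nA nB rho u) = quad nA (ptraceB nB rho) u.
Proof.
unfold trace, condB, ptraceB.
exact (eq_sym (quad_csum nA nB (fun c a a' => rho (a * nB + c)%nat (a' * nB + c)%nat) u)).
Qed.

Lemma trace_condA nA nB rho v : trace nA (condA nB rho v) = quad nB (ptraceA nA nB rho) v.
Proof.
unfold trace, condA, ptraceA.
exact (eq_sym (quad_csum nB nA (fun a c c' => rho (a * nB + c)%nat (a * nB + c')%nat) v)).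
Qed.

Lemma trace_ptraceB nA nB rho : trace nA (ptraceB nB rho) = trace (nA * nB) rho.
Proof. unfold trace, ptraceB. rewrite csum_pair. reflexivity. Qed.

Lemma trace_ptraceA nA nB rho : trace nB (ptraceA nA nB rho) = trace (nA * nB) rho.
Proof. unfold trace, ptraceA. rewrite csum_pair, csum_swap. reflexivity. Qed.

Lemma Hent_prodbasis b nA nB e f rho :
  Hent b (nA * nB) (prodbasis nB e f) rho = rsum nA (fun i => Hent b nB f (condB nA nB rho (e i))).
Proof.
unfold Hent. rewrite rsum_pair, <- rsum_opp. apply rsum_ext; intros i Hi. f_equal.
apply rsum_ext; intros k Hk. unfold prob.
fold (quad (nA * nB) rho (prodbasis nB e f (i * nB + k)%nat)) (quad nB (condB nA nB rho (e i)) (f k)).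
rewrite prodbasis_kron, quad_kron_condB by auto. reflexivity.
Qed.

Lemma Hent_prodbasis_condA b nA nB e f rho :
  Hent b (nA * nB) (prodbasis nB e f) rho = rsum nB (fun l => Hent b nA e (condA nB rho (f l))).
Proof.
rewrite Hent_prodbasis. unfold Hent.
rewrite (rsum_ext nA _ (fun i => rsum nB (fun l => - plogp b (prob nB f (condB nA nB rho (e i)) l))))
  by (intros; symmetry; apply rsum_opp).
rewrite rsum_swap. apply rsum_ext; intros l Hl. rewrite <- rsum_opp. apply rsum_ext; intros i Hi. unfold prob.
fold (quad nB (condB nA nB rho (e i)) (f l)) (quad nA (condA nB rho (f l)) (e i)).
rewrite <- quad_kron_condB, quad_kron_condA. reflexivity.
Qed.

Section BipartiteState.
Variables (nA nB : nat) (rho : mat).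
Hypothesis hrho : density (nA * nB) rho.

Lemma Herm_condB u : Herm nB (condB nA nB rho u).
Proof.
intros c c' Hc Hc'. unfold condB. symmetry. apply Cconj_quad.
intros a a' Ha Ha'. destruct hrho as [H _]. apply H; apply pair_lt; auto.
Qed.

Lemma Herm_condA v : Herm nA (condA nB rho v).
Proof.
intros a a' Ha Ha'. unfold condA. symmetry. apply Cconj_quad.
intros c c' Hc Hc'. destruct hrho as [H _]. apply H; apply pair_lt; auto.
Qed.

Lemma PSD_condB u : PSD nB (condB nA nB rho u).
Proof. intros v. rewrite <- quad_kron_condB. destruct hrho as [_ [H _]]. apply H. Qed.

Lemma PSD_condA v : PSD nA (condA nB rho v).
Proof. intros u. rewrite <- quad_kron_condA. destruct hrho as [_ [H _]]. apply H. Qed.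

Lemma rsum_trace_condB e : onb nA e -> rsum nA (fun i => re (trace nB (condB nA nB rho (e i)))) = 1.
Proof.
intros He. rewrite (rsum_ext nA _ (prob nA e (ptraceB nB rho)))
  by (intros; rewrite trace_condB; reflexivity).
rewrite rsum_prob_onb, trace_ptraceB by auto. destruct hrho as [_ [_ T]].
unfold trace. rewrite T. reflexivity.
Qed.

Lemma rsum_trace_condA f : onb nB f -> rsum nB (fun l => re (trace nA (condA nB rho (f l)))) = 1.
Proof.
intros Hf. rewrite (rsum_ext nB _ (prob nB f (ptraceA nA nB rho)))
  by (intros; rewrite trace_condA; reflexivity).
rewrite rsum_prob_onb, trace_ptraceA by auto. destruct hrho as [_ [_ T]].
unfold trace. rewrite T. reflexivity.
Qed.

Lemma Hent_prodbasis_subadditive b e f : 1 < b -> onb nA e -> onb nB f ->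
  Hent b (nA * nB) (prodbasis nB e f) rho
  <= Hent b nA e (ptraceB nB rho) + Hent b nB f (ptraceA nA nB rho).
Proof.
intros Hb He Hf. rewrite Hent_prodbasis. unfold Hent at 1. rewrite rsum_opp.
apply (entropy_subadditive b nA nB (fun i l => prob nB f (condB nA nB rho (e i)) l)); auto.
- intros; apply prob_nonneg, PSD_condB.
- intros i Hi. rewrite rsum_prob_onb, trace_condB by auto. reflexivity.
- intros l Hl. unfold prob.
  rewrite (rsum_ext nA _ (prob nA e (condA nB rho (f l)))).
  + rewrite rsum_prob_onb, trace_condA by auto. reflexivity.
  + intros i Hi. unfold prob. fold (quad nB (condB nA nB rho (e i)) (f l)).
    rewrite <- quad_kron_condB, quad_kron_condA. reflexivity.
- rewrite <- (rsum_trace_condA f Hf). apply rsum_ext; intros l Hl.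
  rewrite trace_condA. reflexivity.
Qed.

End BipartiteState.

(** * Gram factorisation of positive semidefinite matrices *)

Lemma quad_succ n M v : quad (S n) M v =
  Cadd (Cadd (Cadd (quad n M v) (Cmul (csum n (fun i => Cmul (Cconj (v i)) (M i n))) (v n)))
    (Cmul (Cconj (v n)) (csum n (fun j => Cmul (M n j) (v j)))))
    (Cmul (Cmul (Cconj (v n)) (M n n)) (v n)).
Proof.
rewrite !quad_expand. simpl.
rewrite csum_add, <- csum_mulr, <- csum_mull.
rewrite (csum_ext n (fun i => Cmul (Cmul (Cconj (v n)) (M n i)) (v i))
  (fun j => Cmul (Cconj (v n)) (Cmul (M n j) (v j)))) by (intros; ring).
ring.
Qed.

Definition vext (n : nat) (v : vec) (z : C) : vec := fun i => if Nat.ltb i n then v i else z.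

Lemma quad_vext n M v z : quad (S n) M (vext n v z) =
  Cadd (Cadd (Cadd (quad n M v) (Cmul (csum n (fun i => Cmul (Cconj (v i)) (M i n))) z))
    (Cmul (Cconj z) (csum n (fun j => Cmul (M n j) (v j)))))
    (Cmul (Cmul (Cconj z) (M n n)) z).
Proof.
assert (E : forall i, (i < n)%nat -> vext n v z i = v i).
{ intros i Hi. unfold vext. destruct (Nat.ltb_spec i n); [reflexivity|lia]. }
rewrite quad_succ, (quad_ext n M M (vext n v z) v), (csum_ext n _ (fun i => Cmul (Cconj (v i)) (M i n))),
  (csum_ext n (fun j => Cmul (M n j) (vext n v z j)) (fun j => Cmul (M n j) (v j)))
  by (intros; rewrite ?E; auto).
unfold vext. rewrite Nat.ltb_irrefl. reflexivity.
Qed.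

Lemma Herm_diag_real n M : Herm (S n) M -> M n n = mkC (re (M n n)) 0.
Proof.
intros H. assert (E := f_equal im (H n n ltac:(lia) ltac:(lia))). simpl in E.
apply Ceq; simpl; lra.
Qed.

Lemma PSD_diag_nonneg n M : PSD (S n) M -> 0 <= re (M n n).
Proof.
intros H. specialize (H (vext n (fun _ => C0) C1)). rewrite quad_vext in H.
rewrite quad_expand, !csum_zero in H
  by (intros; try (apply csum_zero; intros); rewrite ?Cconj_C0; ring).
replace (re _) with (re (M n n)) in H by (f_equal; apply Ceq; simpl; ring). exact H.
Qed.

(* Otherwise the form would be negative at [v + x e_n] for [v = conj (row n)], [x] large. *)
Lemma PSD_zero_diag_row n M : Herm (S n) M -> PSD (S n) M -> re (M n n) = 0 ->
  forall j, (j < n)%nat -> M n j = C0.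
Proof.
intros Hh Hp D.
set (v0 := fun j => Cconj (M n j)).
set (Sm := csum n (fun j => Cmul (M n j) (v0 j))).
set (sg := rsum n (fun j => re (M n j) * re (M n j) + im (M n j) * im (M n j))).
assert (reS : re Sm = sg) by (unfold Sm; rewrite re_csum; apply rsum_ext; intros; simpl; ring).
assert (imS : im Sm = 0) by (unfold Sm; rewrite im_csum; apply rsum_zero; intros; simpl; ring).
assert (sg0 : 0 <= sg) by (apply rsum_nonneg; intros; nra).
assert (Mnn : M n n = mkC 0 0) by (rewrite (Herm_diag_real n M Hh), D; reflexivity).
assert (Q : forall x, 0 <= re (quad n M v0) - 2 * x * sg).
{ intros x. specialize (Hp (vext n v0 (mkC (- x) 0))). rewrite quad_vext, Mnn in Hp.
  rewrite (csum_ext n (fun i => Cmul (Cconj (v0 i)) (M i n)) (fun j => Cmul (M n j) (v0 j))) in Hp.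
  - fold Sm in Hp. simpl in Hp. rewrite reS, imS in Hp. lra.
  - intros i Hi. unfold v0. rewrite Cconj_involutive, (Hh i n), Cconj_involutive by lia.
    reflexivity. }
assert (sgz : sg = 0).
{ destruct (Req_dec sg 0) as [|Hs]; auto.
  specialize (Q ((re (quad n M v0) + 1) / (2 * sg))).
  replace (re (quad n M v0) - 2 * ((re (quad n M v0) + 1) / (2 * sg)) * sg) with (-1) in Q
    by (field; lra).
  lra. }
intros j Hj.
assert (Z : re (M n j) * re (M n j) + im (M n j) * im (M n j) = 0).
{ apply (rsum_nonneg_eq0 n (fun j => re (M n j) * re (M n j) + im (M n j) * im (M n j)));
    [intros; nra | exact sgz | exact Hj]. }
apply Ceq; simpl; nra.
Qed.

(* [d * / d] is [1], or [0] when [d = 0] (as [/ 0 = 0]); then the whole last row vanishes. *)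
Lemma PSD_last_row_scale n M : Herm (S n) M -> PSD (S n) M -> forall j, (j < S n)%nat ->
  Cmul (M n j) (mkC (re (M n n) * / re (M n n)) 0) = M n j.
Proof.
intros Hh Hp j Hj. destruct (Req_dec (re (M n n)) 0) as [D|D].
- assert (Z : M n j = C0).
  { destruct (Nat.eq_dec j n) as [->|Hjn].
    - rewrite (Herm_diag_real n M Hh), D. reflexivity.
    - apply (PSD_zero_diag_row n M); auto; lia. }
  rewrite Z. apply Ceq; simpl; ring.
- rewrite Rinv_r by auto. apply Ceq; simpl; ring.
Qed.

Definition schur (n : nat) (M : mat) : mat :=
  fun i j => Csub (M i j) (Cmul (Cmul (M i n) (M n j)) (mkC (/ re (M n n)) 0)).

Lemma Herm_schur n M : Herm (S n) M -> Herm n (schur n M).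
Proof.
intros Hh i j Hi Hj. unfold schur.
rewrite (Hh i j), (Hh n i), (Hh n j) by lia. apply Ceq; simpl; ring.
Qed.

(* Test the form of [M] on [v] extended by [z = - (row n . v) / M n n]. *)
Lemma PSD_schur n M : Herm (S n) M -> PSD (S n) M -> PSD n (schur n M).
Proof.
intros Hh Hp v.
set (d := re (M n n)). set (k := mkC (/ d) 0).
set (Sm := csum n (fun j => Cmul (M n j) (v j))).
set (A := csum n (fun i => Cmul (Cconj (v i)) (M i n))).
set (z := Cmul (Copp k) Sm).
assert (EB : quad n (schur n M) v = Csub (quad n M v) (Cmul (Cmul A k) Sm)).
{ rewrite !quad_expand. unfold A. rewrite <- !csum_mulr, <- csum_sub.
  apply csum_ext; intros i Hi. unfold Sm. rewrite <- csum_mull, <- csum_sub.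
  apply csum_ext; intros j Hj. unfold schur. fold d k. ring. }
assert (Z : Cadd Sm (Cmul (mkC d 0) z) = C0).
{ assert (R : Cmul Sm (mkC (d * / d) 0) = Sm).
  { unfold Sm. rewrite <- csum_mulr. apply csum_ext; intros j Hj.
    rewrite <- (PSD_last_row_scale n M Hh Hp j) at 2 by lia. fold d. ring. }
  unfold z, k. rewrite <- R at 1. apply Ceq; simpl; ring. }
specialize (Hp (vext n v z)). rewrite quad_vext, (Herm_diag_real n M Hh) in Hp. fold A Sm d in Hp.
replace (Cadd (Cadd (Cadd (quad n M v) (Cmul A z)) (Cmul (Cconj z) Sm)) (Cmul (Cmul (Cconj z) (mkC d 0)) z))
  with (Cadd (Cadd (quad n M v) (Cmul A z)) (Cmul (Cconj z) (Cadd Sm (Cmul (mkC d 0) z)))) in Hp by ring.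
rewrite Z in Hp. rewrite EB.
replace (Csub (quad n M v) (Cmul (Cmul A k) Sm))
  with (Cadd (Cadd (quad n M v) (Cmul A z)) (Cmul (Cconj z) C0)) by (unfold z; ring).
exact Hp.
Qed.

Definition wext (n : nat) (w' : nat -> vec) (L : vec) : nat -> vec :=
  fun k => if Nat.ltb k n then vext n (w' k) C0 else L.

Lemma gram_wext n w' L a a' :
  csum (S n) (fun k => Cmul (wext n w' L k a) (Cconj (wext n w' L k a'))) =
  Cadd (if Nat.ltb a n then if Nat.ltb a' n
        then csum n (fun k => Cmul (w' k a) (Cconj (w' k a'))) else C0 else C0)
       (Cmul (L a) (Cconj (L a'))).
Proof.
simpl. unfold wext at 3 4. rewrite Nat.ltb_irrefl. f_equal.
rewrite (csum_ext n _ (fun k => Cmul (vext n (w' k) C0 a) (Cconj (vext n (w' k) C0 a')))).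
2:{ intros k Hk. unfold wext. destruct (Nat.ltb_spec k n); [reflexivity|lia]. }
unfold vext. destruct (Nat.ltb a n), (Nat.ltb a' n); try reflexivity;
  apply csum_zero; intros; rewrite ?Cconj_C0; ring.
Qed.

Lemma PSD_gram n M : Herm n M -> PSD n M ->
  exists w : nat -> vec, forall a a', (a < n)%nat -> (a' < n)%nat ->
    M a a' = csum n (fun k => Cmul (w k a) (Cconj (w k a'))).
Proof.
revert M. induction n as [|n IH]; intros M Hh Hp.
{ exists (fun _ _ => C0). intros; lia. }
set (d := re (M n n)).
assert (k0 : 0 <= / d).
{ assert (0 <= d) by apply (PSD_diag_nonneg n M Hp).
  destruct (Req_dec d 0) as [->|]; [rewrite Rinv_0; lra | left; apply Rinv_0_lt_compat; lra]. }
assert (Row := PSD_last_row_scale n M Hh Hp). fold d in Row.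
assert (Mnn := Herm_diag_real n M Hh). fold d in Mnn.
destruct (IH (schur n M) (Herm_schur n M Hh) (PSD_schur n M Hh Hp)) as [w' Hw'].
set (r := sqrt (/ d)).
(* Factor the Schur complement and add the column [M . n / sqrt (M n n)]. *)
exists (wext n w' (fun a => Cmul (M a n) (mkC r 0))). intros a a' Ha Ha'. rewrite gram_wext.
replace (Cmul (Cmul (M a n) (mkC r 0)) (Cconj (Cmul (M a' n) (mkC r 0))))
  with (Cmul (Cmul (M a n) (M n a')) (mkC (/ d) 0)).
2:{ rewrite (Hh a' n) by lia. unfold r. rewrite <- (sqrt_sqrt (/ d) k0) at 1.
    apply Ceq; simpl; ring. }
destruct (Nat.ltb_spec a n), (Nat.ltb_spec a' n).
- rewrite <- Hw' by auto. unfold schur. fold d. ring.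
- assert (a' = n) by lia. subst a'. rewrite Mnn, (Hh n a) by lia.
  rewrite <- (Row a) at 1 by lia. apply Ceq; simpl; ring.
- assert (a = n) by lia. subst a. rewrite Mnn.
  rewrite <- (Row a') at 1 by lia. apply Ceq; simpl; ring.
- assert (a = n) by lia. assert (a' = n) by lia. subst.
  rewrite <- (Row n) at 1 by lia. rewrite Mnn. apply Ceq; simpl; ring.
Qed.

(** * Product states *)

Definition tensor_mat (nB : nat) (rA rB : mat) : mat :=
  fun m m' => Cmul (rA (Nat.div m nB) (Nat.div m' nB)) (rB (Nat.modulo m nB) (Nat.modulo m' nB)).

Lemma quad_tensor_rank_one nA nB (w : vec) rB V :
  quad (nA * nB) (tensor_mat nB (fun a a' => Cmul (w a) (Cconj (w a'))) rB) V =
  quad nB rB (fun c => csum nA (fun a => Cmul (Cconj (w a)) (V (a * nB + c)%nat))).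
Proof.
rewrite quad_pair, quad_expand, csum4_reorder.
apply csum_ext; intros c Hc; apply csum_ext; intros c' Hc'.
rewrite Cconj_csum, csum_mul_csum. apply csum_ext; intros a _; apply csum_ext; intros a' _.
unfold tensor_mat. rewrite !pair_div, !pair_mod, !Cconj_mul, Cconj_involutive by auto. ring.
Qed.

Lemma PSD_tensor nA nB rA rB : Herm nA rA -> PSD nA rA -> PSD nB rB ->
  PSD (nA * nB) (tensor_mat nB rA rB).
Proof.
intros HhA HpA HpB V. destruct (PSD_gram nA rA HhA HpA) as [w Hw].
rewrite (quad_ext (nA * nB) _
  (fun m m' => csum nA (fun k => tensor_mat nB (fun a a' => Cmul (w k a) (Cconj (w k a'))) rB m m'))
  V V).
- rewrite quad_csum, re_csum. apply rsum_nonneg; intros k _.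
  rewrite quad_tensor_rank_one. apply HpB.
- intros m m' Hm Hm'. destruct (pair_bounds _ _ _ Hm), (pair_bounds _ _ _ Hm').
  unfold tensor_mat. rewrite Hw, csum_mulr by auto. reflexivity.
- reflexivity.
Qed.

Lemma density_tensor nA nB rA rB : density nA rA -> density nB rB ->
  density (nA * nB) (tensor_mat nB rA rB).
Proof.
intros [HhA [HpA TA]] [HhB [HpB TB]]. split; [|split].
- intros m m' Hm Hm'. destruct (pair_bounds _ _ _ Hm), (pair_bounds _ _ _ Hm').
  unfold tensor_mat. rewrite HhA, HhB, Cconj_mul by auto. reflexivity.
- apply PSD_tensor; auto.
- rewrite csum_pair.
  rewrite (csum_ext nA _ (fun a => Cmul (rA a a) (csum nB (fun c => rB c c)))).
  + rewrite TB, csum_mulr, TA. apply Ceq; simpl; ring.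
  + intros a Ha. rewrite <- csum_mull. apply csum_ext; intros c Hc.
    unfold tensor_mat. rewrite pair_div, pair_mod by auto. reflexivity.
Qed.

Lemma Hent_ext b n e M M' : (forall i j, (i < n)%nat -> (j < n)%nat -> M i j = M' i j) ->
  Hent b n e M = Hent b n e M'.
Proof.
intros H. unfold Hent, prob. f_equal. apply rsum_ext; intros k _.
fold (quad n M (e k)) (quad n M' (e k)). rewrite (quad_ext n M M' (e k) (e k)); auto.
Qed.

Lemma condB_tensor nA nB rA rB u : Herm nA rA -> forall c c', (c < nB)%nat -> (c' < nB)%nat ->
  condB nA nB (tensor_mat nB rA rB) u c c' = scalemat (re (quad nA rA u)) rB c c'.
Proof.
intros HhA c c' Hc Hc'. unfold condB, scalemat.
rewrite (quad_ext nA _ (fun a a' => Cmul (rB c c') (rA a a')) u u).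
- rewrite quad_scale. apply Ceq; simpl; rewrite (im_quad_Herm nA rA u HhA); ring.
- intros a a' _ _. unfold tensor_mat. rewrite !pair_div, !pair_mod by auto. ring.
- reflexivity.
Qed.

Lemma Hent_tensor b nA nB e f rA rB : onb nA e -> onb nB f -> density nA rA -> density nB rB ->
  Hent b (nA * nB) (prodbasis nB e f) (tensor_mat nB rA rB) = Hent b nA e rA + Hent b nB f rB.
Proof.
intros He Hf [HhA [HpA TA]] [HhB [HpB TB]].
assert (TrB : re (trace nB rB) = 1) by (unfold trace; rewrite TB; reflexivity).
rewrite Hent_prodbasis.
rewrite (rsum_ext nA _ (fun i => prob nA e rA i * Hent b nB f rB - plogp b (prob nA e rA i))).
- unfold Rminus. rewrite rsum_add, rsum_mulr, rsum_opp, rsum_prob_onb by auto.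
  unfold trace. rewrite TA. unfold Hent at 2. simpl. ring.
- intros i Hi. rewrite (Hent_ext b nB f _ (scalemat (prob nA e rA i) rB)).
  + apply Hent_scalemat; auto. apply prob_nonneg; auto.
  + apply condB_tensor; auto.
Qed.

Lemma Hent_ptraceB b nA nB e rho :
  Hent b nA e (ptraceB nB rho) = entropy b nA (fun i => re (trace nB (condB nA nB rho (e i)))).
Proof. unfold Hent, entropy. f_equal. apply rsum_ext; intros. rewrite trace_condB. reflexivity. Qed.

Lemma Hent_ptraceA b nA nB f rho :
  Hent b nB f (ptraceA nA nB rho) = entropy b nB (fun l => re (trace nA (condA nB rho (f l)))).
Proof. unfold Hent, entropy. f_equal. apply rsum_ext; intros. rewrite trace_condA. reflexivity. Qed.

Theorem uncertainty_bipartite b (hb : 1 < b) nA nB XA YA XB YB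
  (hXA : onb nA XA) (hYA : onb nA YA) (hXB : onb nB XB) (hYB : onb nB YB)
  lam mu (hlam : 0 < lam) (hmu : 0 < mu) cA cB :
  (forall rhoA, density nA rhoA -> lam * Hent b nA XA rhoA + mu * Hent b nA YA rhoA >= cA) ->
  (forall rhoB, density nB rhoB -> lam * Hent b nB XB rhoB + mu * Hent b nB YB rhoB >= cB) ->
  forall rho, density (nA * nB) rho ->
    lam * Hent b (nA * nB) (prodbasis nB XA XB) rho
    + mu * Hent b (nA * nB) (prodbasis nB YA YB) rho >= cA + cB.
Proof.
intros HA HB rho Hd.
assert (CondXA := uncertainty_mixture b nB XB YB lam mu cB hXB hYB HB nA
  (fun i => condB nA nB rho (XA i))
  (fun i _ => Herm_condB nA nB rho Hd (XA i)) (fun i _ => PSD_condB nA nB rho Hd (XA i))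
  (rsum_trace_condB nA nB rho Hd XA hXA)).
assert (CondYB := uncertainty_mixture b nA XA YA lam mu cA hXA hYA HA nB
  (fun l => condA nB rho (YB l))
  (fun l _ => Herm_condA nA nB rho Hd (YB l)) (fun l _ => PSD_condA nA nB rho Hd (YB l))
  (rsum_trace_condA nA nB rho Hd YB hYB)).
cbv beta in CondXA, CondYB.
rewrite <- !Hent_prodbasis, <- Hent_ptraceB in CondXA.
rewrite <- !Hent_prodbasis_condA, <- Hent_ptraceA in CondYB.
assert (Sub := Hent_prodbasis_subadditive nA nB rho Hd b XA YB hb hXA hYB).
assert ((lam + mu) * Hent b (nA * nB) (prodbasis nB XA YB) rho
        <= (lam + mu) * (Hent b nA XA (ptraceB nB rho) + Hent b nB YB (ptraceA nA nB rho)))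
  by (apply Rmult_le_compat_l; lra).
lra.
Qed.

Theorem uncertainty_bipartite_inf b (hb : 1 < b) nA nB XA YA XB YB
  (hXA : onb nA XA) (hYA : onb nA YA) (hXB : onb nB XB) (hYB : onb nB YB)
  lam mu (hlam : 0 < lam) (hmu : 0 < mu) cA cB :
  is_inf (urvals b lam mu nA XA YA) cA -> is_inf (urvals b lam mu nB XB YB) cB ->
  is_inf (urvals b lam mu (nA * nB) (prodbasis nB XA XB) (prodbasis nB YA YB)) (cA + cB).
Proof.
intros [LA GA] [LB GB]. split.
- intros x [rho [Hd ->]]. apply Rge_le, uncertainty_bipartite; auto.
  + intros rA DA. apply Rle_ge, LA. exists rA; auto.
  + intros rB DB. apply Rle_ge, LB. exists rB; auto.
- intros m Hm.
  assert (K : forall rA rB, density nA rA -> density nB rB ->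
    m <= (lam * Hent b nA XA rA + mu * Hent b nA YA rA)
         + (lam * Hent b nB XB rB + mu * Hent b nB YB rB)).
  { intros rA rB DA DB. apply Hm. exists (tensor_mat nB rA rB).
    split; [apply density_tensor; auto|]. rewrite !Hent_tensor by auto. ring. }
  assert (m - cB <= cA); [|lra].
  apply GA. intros xA [rA [DA ->]].
  assert (m - (lam * Hent b nA XA rA + mu * Hent b nA YA rA) <= cB); [|lra].
  apply GB. intros xB [rB [DB ->]]. specialize (K rA rB DA DB). lra.
Qed.

Theorem proposition1 (b : R) (hb : 1 < b) (nA nB : nat)
  (XA YA XB YB : nat -> vec)
  (hXA : onb nA XA) (hYA : onb nA YA) (hXB : onb nB XB) (hYB : onb nB YB)
  (lam mu : R) (hlam : 0 < lam) (hmu : 0 < mu) (cA cB : R) :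
  ((forall rhoA, density nA rhoA -> lam * Hent b nA XA rhoA + mu * Hent b nA YA rhoA >= cA) ->
   (forall rhoB, density nB rhoB -> lam * Hent b nB XB rhoB + mu * Hent b nB YB rhoB >= cB) ->
   forall rhoAB, density (nA * nB) rhoAB ->
     lam * Hent b (nA * nB) (prodbasis nB XA XB) rhoAB
     + mu * Hent b (nA * nB) (prodbasis nB YA YB) rhoAB >= cA + cB)
  /\
  (is_inf (urvals b lam mu nA XA YA) cA ->
   is_inf (urvals b lam mu nB XB YB) cB ->
   is_inf (urvals b lam mu (nA * nB) (prodbasis nB XA XB) (prodbasis nB YA YB)) (cA + cB)).
Proof.
split.
- apply uncertainty_bipartite; auto.
- apply uncertainty_bipartite_inf; auto.
Qed.
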